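(* Let $m\ge1$. The set $\mathbb{T}[[t_1,\ldots,t_m]]$, equipped with the operations $S\oplus T=\operatorname{Vert}(S\cup T)$ and $S\odot T=\operatorname{Vert}(S+T)$ (Minkowski sum), is a commutative idempotent semiring with zero element $\emptyset$ and unit element $\{(0,\ldots,0)\}$.
   Context: For $X\subseteq \mathbb{Z}_{\geq0}^m$, the Newton polygon $\mathcal{N}(X)\subseteq\mathbb{R}_{\geq0}^m$ is the convex hull (in $\mathbb{R}^m$) of $X+\mathbb{Z}_{\geq0}^m$. An element $x\in X$ is a vertex of $X$ if $x\notin\mathcal{N}(X\setminus\{x\})$, and $\operatorname{Vert}(X)$ denotes the set of vertices of $X$. The map $\operatorname{Vert}$ on the power set $\mathcal{P}(\mathbb{Z}_{\ge0}^m)$ satisfies $\operatorname{Vert}\circ\operatorname{Vert}=\operatorname{Vert}$, and $\mathbb{T}[[t_1,\ldots,t_m]]$ denotes its image $\{\operatorname{Vert}(X): X\subseteq\mathbb{Z}_{\ge0}^m\}$ (the set of vertex sets). A commutative semiring is a tuple $(S,+,\times,0,1)$ with $(S,+,0)$, $(S,\times,1)$ commutative monoids, $\times$ distributing over $+$, and $0\times a=0$; it is idempotent if $a+a=a$ for all $a$. *)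

From HB Require Import structures.
From mathcomp Require Import all_boot all_order all_algebra.
Set Implicit Arguments. Unset Strict Implicit. Unset Printing Implicit Defensive.
Import Order.TTheory GRing.Theory Num.Theory.
Local Open Scope ring_scope.

Definition pt (m : nat) := 'I_m -> nat.
Definition pset (m : nat) := pt m -> Prop.

Definition ptR (R : realFieldType) m (x : pt m) : 'I_m -> R :=
  fun i => (x i)%:R.

Definition upset m (X : pset m) : pset m :=
  fun y => exists x, X x /\ forall i, (x i <= y i)%N.

Definition minkowski m (S T : pset m) : pset m :=
  fun z => exists x y, S x /\ T y /\ forall i, z i = (x i + y i)%N.

Definition newton (R : realFieldType) m (X : pset m) : ('I_m -> R) -> Prop :=
  fun v => exists (n : nat) (p : 'I_n -> pt m) (l : 'I_n -> R),
    (forall k, upset X (p k)) /\ (forall k, 0 <= l k) /\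
    \sum_(k < n) l k = 1 /\
    forall i, v i = \sum_(k < n) l k * ((p k i)%:R).

Arguments newton R {m} X v.

Definition vertex (R : realFieldType) m (X : pset m) (x : pt m) : Prop :=
  X x /\ ~ newton R (fun y => X y /\ y <> x) (ptR R x).

Arguments vertex R {m} X x.

Definition Vert (R : realFieldType) m (X : pset m) : pset m := vertex R X.

Arguments Vert R {m} X _.

(* membership in T[[t_1,...,t_m]] = image of Vert *)
Definition inTT (R : realFieldType) m (S : pset m) : Prop :=
  exists X : pset m, S = Vert R X.

Definition oplus (R : realFieldType) m (S T : pset m) : pset m :=
  Vert R (fun x => S x \/ T x).
Definition odot (R : realFieldType) m (S T : pset m) : pset m :=
  Vert R (minkowski S T).
Definition tzero m : pset m := fun _ => False.
Definition tone m : pset m := fun x => forall i, x i = 0%N.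

Definition comm_idem_semiring (A : Type) (C : A -> Prop)
  (add mul : A -> A -> A) (zero one : A) : Prop :=
  C zero /\ C one /\
      (forall a b, C a -> C b -> C (add a b)) /\
      (forall a b, C a -> C b -> C (mul a b)) /\
      (forall a b c, C a -> C b -> C c -> add a (add b c) = add (add a b) c) /\
      (forall a b, C a -> C b -> add a b = add b a) /\
      (forall a, C a -> add zero a = a) /\
      (forall a b c, C a -> C b -> C c -> mul a (mul b c) = mul (mul a b) c) /\
      (forall a b, C a -> C b -> mul a b = mul b a) /\
      (forall a, C a -> mul one a = a) /\
      (forall a b c, C a -> C b -> C c -> mul a (add b c) = add (mul a b) (mul a c)) /\
      (forall a, C a -> mul zero a = zero) /\
      (forall a, C a -> add a a = a).

From HB Require Import structures.
From mathcomp Require Import all_boot all_order all_algebra.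
From mathcomp Require Import ring lra.
From Stdlib Require Import FunctionalExtensionality PropExtensionality Classical.
From Stdlib Require List.
Set Implicit Arguments. Unset Strict Implicit. Unset Printing Implicit Defensive.
Import Order.TTheory GRing.Theory Num.Theory.
Local Open Scope ring_scope.

(* Every semiring law reduces to the corresponding law for union and Minkowski
   sum of subsets, once we know Vert (A ∪ Vert B) = Vert (A ∪ B) and
   Vert (A + Vert B) = Vert (A + B).  Both follow from N(Vert X) = N(X): the
   Newton polygon is generated by its vertices.  By Dickson's lemma N(X) = N(F)
   for a finite set F of points of X; discarding redundant points of F leaves
   an irredundant E, and every g in E is a vertex of X.  Indeed a combination
   of points of X \ g lying below g can be rewritten over E, and a count of
   total degrees shows that its part on E \ g has positive weight, so that
   g ∈ N(E \ g) after rescaling.  Throughout, v ∈ N(X) is handled as "v lies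
   above a convex combination of points of X"; at lattice points this agrees
   with the convex-hull definition, by raising coordinates one at a time. *)

Lemma pset_ext m (A B : pset m) : (forall x, A x <-> B x) -> A = B.
Proof.
by move=> AB; apply: functional_extensionality => x; apply: propositional_extensionality.
Qed.

Lemma In_nth T (x0 : T) s k : (k < size s)%N -> List.In (nth x0 s k) s.
Proof. by elim: s k => [|a s IH] [|k] //= ks; [left | right; apply: IH]. Qed.

Lemma size_filter_lt T (p : pred T) (s : seq T) f :
  List.In f s -> ~~ p f -> (size (filter p s) < size s)%N.
Proof.
elim: s => [|a s IH] //= [<- /negbTE->|fs pf]; first by rewrite ltnS size_filter count_size.
by case: ifP => _ /=; [rewrite ltnS IH | apply: leq_trans (IH fs pf) _].
Qed.

Section Combinations.
Variables (R : realFieldType) (m : nat).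
Implicit Types (X Y G W : pset m) (x y g u : pt m) (s r t : seq (R * pt m)).

Definition weight s : R := \sum_(q <- s) q.1.
Definition lincomb s (i : 'I_m) : R := \sum_(q <- s) q.1 * (q.2 i)%:R.
Definition supported X s := forall q, List.In q s -> 0 <= q.1 /\ X q.2.
Definition scalec (c : R) s := [seq (c * q.1, q.2) | q <- s].

(* [dominates X 1 v] says v ∈ conv(X) + R_{>=0}^m = N(X); see [vertexP]. *)
Definition dominates X (w : R) (v : 'I_m -> R) :=
  exists s, [/\ supported X s, weight s = w & forall i, lincomb s i <= v i].

Definition delpt X x : pset m := fun y => X y /\ y <> x.

Lemma weight_cat s t : weight (s ++ t) = weight s + weight t.
Proof. exact: big_cat. Qed.

Lemma lincomb_cat s t i : lincomb (s ++ t) i = lincomb s i + lincomb t i.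
Proof. exact: big_cat. Qed.

Lemma weight_scale c s : weight (scalec c s) = c * weight s.
Proof. by rewrite /weight big_map mulr_sumr. Qed.

Lemma lincomb_scale c s i : lincomb (scalec c s) i = c * lincomb s i.
Proof. by rewrite /lincomb big_map mulr_sumr; apply: eq_bigr => q _; rewrite mulrA. Qed.

Lemma supported_cat X s t : supported X s -> supported X t -> supported X (s ++ t).
Proof. by move=> Xs Xt q /List.in_app_iff[/Xs|/Xt]. Qed.

Lemma supported_scale X c s : 0 <= c -> supported X s -> supported X (scalec c s).
Proof.
move=> c0 Xs q /List.in_map_iff[p [<- /Xs[p0 Xp]]]; split=> //; exact: mulr_ge0.
Qed.

Lemma supported_sub X Y s : (forall y, X y -> Y y) -> supported X s -> supported Y s.
Proof. by move=> XY Xs q /Xs[q0 /XY]. Qed.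

Lemma supported_cons X q s : supported X (q :: s) <-> (0 <= q.1 /\ X q.2) /\ supported X s.
Proof.
split=> [Xqs|[Xq Xs] p [<-|/Xs]] //.
by split=> [|p Hp]; apply: Xqs; [left | right].
Qed.

Lemma weight_ge0 X s : supported X s -> 0 <= weight s.
Proof.
elim: s => [|q s IH]; rewrite /weight ?big_nil ?big_cons // => /supported_cons[[q0 _] Xs].
by apply: addr_ge0; [ | exact: IH].
Qed.

Lemma lincomb_ge0 X s i : supported X s -> 0 <= lincomb s i.
Proof.
elim: s => [|q s IH]; rewrite /lincomb ?big_nil ?big_cons // => /supported_cons[[q0 _] Xs].
by apply: addr_ge0; [apply: mulr_ge0 | exact: IH].
Qed.

Lemma dominatesD X w1 w2 v1 v2 : dominates X w1 v1 -> dominates X w2 v2 ->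
  dominates X (w1 + w2) (fun i => v1 i + v2 i).
Proof.
move=> [s [Xs <- sv]] [t [Xt <- tv]]; exists (s ++ t); split.
- exact: supported_cat.
- exact: weight_cat.
- by move=> i; rewrite lincomb_cat lerD.
Qed.

Lemma dominatesZ X c w v : 0 <= c -> dominates X w v -> dominates X (c * w) (fun i => c * v i).
Proof.
move=> c0 [s [Xs <- sv]]; exists (scalec c s); split.
- exact: supported_scale.
- exact: weight_scale.
- by move=> i; rewrite lincomb_scale ler_wpM2l.
Qed.

Lemma dominates_le X w v v' : (forall i, v i <= v' i) -> dominates X w v -> dominates X w v'.
Proof. by move=> vv' [s [Xs sw sv]]; exists s; split=> // i; apply: le_trans (vv' i). Qed.

Lemma dominates_sub X Y w v : (forall y, X y -> Y y) -> dominates X w v -> dominates Y w v.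
Proof. by move=> XY [s [Xs sw sv]]; exists s; split=> //; apply: supported_sub Xs. Qed.

Lemma dominates0 X : dominates X 0 (fun _ => 0).
Proof.
by exists [::]; split=> [q []||i]; rewrite /weight /lincomb ?big_nil.
Qed.

Lemma dominates_pt X x : X x -> dominates X 1 (ptR R x).
Proof.
move=> Xx; exists [:: (1, x)]; split.
- by move=> q [<-|].
- by rewrite /weight big_seq1.
- by move=> i; rewrite /lincomb big_seq1 mul1r.
Qed.

Lemma dominates_ind X (Q : R -> ('I_m -> R) -> Prop) :
  (forall w v v', (forall i, v i <= v' i) -> Q w v -> Q w v') ->
  Q 0 (fun _ => 0) ->
  (forall c x w v, 0 <= c -> X x -> Q w v -> Q (c + w) (fun i => c * (x i)%:R + v i)) ->
  forall w v, dominates X w v -> Q w v.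
Proof.
move=> Qle Q0 QS w v [s [Xs <- sv]]; apply: (Qle _ _ _ sv).
elim: {sv} s Xs => [_|[c x] s IH /supported_cons[[/= c0 Xx] /IH Qs]].
  by rewrite /weight big_nil; apply: (Qle _ _ _ _ Q0) => i; rewrite /lincomb big_nil.
rewrite /weight big_cons; apply: (Qle _ _ _ _ (QS _ _ _ _ c0 Xx Qs)) => i.
by rewrite /lincomb big_cons.
Qed.

Lemma dominates_trans X Y w v : (forall x, X x -> dominates Y 1 (ptR R x)) ->
  dominates X w v -> dominates Y w v.
Proof.
move=> XY; apply: dominates_ind => [w' v1 v2||c x w' v' c0 Xx].
- exact: dominates_le.
- exact: dominates0.
- by move/(dominatesD (dominatesZ c0 (XY x Xx))); rewrite mulr1.
Qed.

Lemma dominates_empty X v : (forall x, ~ X x) -> ~ dominates X 1 v.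
Proof.
move=> X0 D; suff /eqP : (1 : R) = 0 by rewrite oner_eq0.
by apply: (dominates_ind (Q := fun w _ => w = 0)) D => // c x ? ? _ /X0.
Qed.

Lemma ler_sum_supported X s (F G : R * pt m -> R) :
  supported X s -> (forall q, 0 <= q.1 -> X q.2 -> F q <= G q) ->
  \sum_(q <- s) F q <= \sum_(q <- s) G q.
Proof.
move=> + FG; elim: s => [|q s IH]; rewrite ?big_nil ?big_cons // => /supported_cons[[q0 Xq] Xs].
by rewrite lerD ?FG ?IH.
Qed.

End Combinations.

Section NewtonPolygon.
Variables (R : realFieldType) (m : nat).
Implicit Types (X : pset m) (x : pt m) (s t : seq (R * pt m)).

Lemma upset_le X p q : upset X p -> (forall i, p i <= q i)%N -> upset X q.
Proof. by move=> [x [Xx xp]] pq; exists x; split=> // i; apply: leq_trans (pq i). Qed.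

Lemma upset_self X x : X x -> upset X x.
Proof. by exists x. Qed.

Lemma dominates_upset X (w : R) v : dominates (upset X) w v -> dominates X w v.
Proof.
apply: dominates_trans => p [x [Xx xp]].
by apply: dominates_le (dominates_pt R Xx) => i; rewrite ler_nat.
Qed.

Lemma convex_between (a b x : R) :
  a <= x -> x <= b -> exists2 th, 0 <= th <= 1 & (1 - th) * a + th * b = x.
Proof.
move=> ax xb; have [eab|nab] := eqVneq a b.
  exists 0; first by rewrite lexx ler01.
  by rewrite subr0 mul1r mul0r addr0; apply/le_anti; rewrite ax eab.
have ab : 0 < b - a by rewrite subr_gt0 lt_neqAle nab (le_trans ax xb).
exists ((x - a) / (b - a)); last by field; rewrite gt_eqF.
by rewrite divr_ge0 ?subr_ge0 ?(le_trans ax xb) //= ler_pdivrMr // mul1r lerD2r.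
Qed.

Definition raise (j : 'I_m) (c : nat) (p : pt m) : pt m :=
  fun i => if i == j then maxn (p i) c else p i.

(* Raise coordinate [j] of every point to at least [x j], then interpolate
   between the old and the raised combination. *)
Lemma fix_coord X x j s :
  supported (upset X) s -> weight s = 1 -> lincomb s j <= (x j)%:R ->
  exists t, [/\ supported (upset X) t, weight t = 1, lincomb t j = (x j)%:R
    & forall i, i != j -> lincomb t i = lincomb s i].
Proof.
move=> Xs ws sx; pose s' := [seq (q.1, raise j (x j) q.2) | q <- s].
have Xs' : supported (upset X) s'.
  move=> q /List.in_map_iff[p [<- /Xs[p0 Xp]]]; split=> //; apply: (upset_le Xp) => i.
  by rewrite /raise /=; case: ifP => // _; apply: leq_maxl.
have ws' : weight s' = 1 by rewrite -ws /weight big_map.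
have s's i : i != j -> lincomb s' i = lincomb s i.
  by move=> /negbTE ij; rewrite /lincomb big_map /raise /= ij.
have lbs' : (x j)%:R <= lincomb s' j.
  rewrite -[(x j)%:R]mul1r -{1}ws /weight mulr_suml /lincomb big_map.
  apply: (ler_sum_supported Xs) => q q0 _.
  by apply: ler_wpM2l => //; rewrite /raise /= eqxx ler_nat leq_maxr.
have [th /andP[th0 th1] thx] := convex_between sx lbs'.
exists (scalec (1 - th) s ++ scalec th s'); split.
- by apply: supported_cat; apply: supported_scale; rewrite ?subr_ge0.
- by rewrite weight_cat !weight_scale ws ws' !mulr1 subrK.
- by rewrite lincomb_cat !lincomb_scale.
- by move=> i ij; rewrite lincomb_cat !lincomb_scale s's // -mulrDl subrK mul1r.
Qed.

Lemma fix_coords X x (J : seq 'I_m) s :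
  supported (upset X) s -> weight s = 1 -> (forall i, lincomb s i <= (x i)%:R) ->
  exists t, [/\ supported (upset X) t, weight t = 1,
    forall i, lincomb t i <= (x i)%:R & forall i, i \in J -> lincomb t i = (x i)%:R].
Proof.
move=> Xs ws sx; elim: J => [|j J [t [Xt wt tx tJ]]]; first by exists s.
have [t' [Xt' wt' t'j t't]] := fix_coord Xt wt (tx j).
exists t'; split=> // i; first by case: (eqVneq i j) => [->|/t't->]; rewrite ?t'j.
by rewrite inE; case: (eqVneq i j) => [->|/t't-> /= /tJ].
Qed.

Lemma newtonP X v : newton R X v <->
  exists s, [/\ supported (upset X) s, weight s = 1 & forall i, lincomb s i = v i].
Proof.
split=> [[n [p [l [Xp [l0 [l1 lv]]]]]]|[s [Xs ws sv]]].
  exists [seq (l k, p k) | k <- index_enum 'I_n]; split.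
  - by move=> q /List.in_map_iff[k [<- _]]; split; [apply: l0 | apply: Xp].
  - by rewrite /weight big_map.
  - by move=> i; rewrite lv /lincomb big_map.
pose q0 : R * pt m := (0, fun _ => 0%N).
exists (size s), (fun k => (nth q0 s k).2), (fun k => (nth q0 s k).1).
have Xk (k : 'I_(size s)) := Xs _ (In_nth q0 (ltn_ord k)).
split=> [k|]; first exact: (Xk k).2.
split=> [k|]; first exact: (Xk k).1.
split=> [|i]; first by rewrite -ws /weight (big_nth q0) big_mkord.
by rewrite -sv /lincomb (big_nth q0) big_mkord.
Qed.

Lemma newton_dominates X v : newton R X v -> dominates X 1 v.
Proof.
move=> /newtonP[s [Xs ws sv]]; apply: dominates_upset; exists s.
by split=> // i; rewrite sv.
Qed.

Lemma dominates_newton X x : dominates X 1 (ptR R x) -> newton R X (ptR R x).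
Proof.
move=> /(dominates_sub (@upset_self X))[s [Xs ws sx]].
have [t [Xt wt _ tx]] := fix_coords (enum 'I_m) Xs ws sx.
by apply/newtonP; exists t; split=> // i; rewrite tx ?mem_enum.
Qed.

Lemma vertexP X x : vertex R X x <-> X x /\ ~ dominates (delpt X x) 1 (ptR R x).
Proof.
split=> [[Xx N]|[Xx N]]; split=> // D; apply: N.
- exact: dominates_newton.
- exact: newton_dominates.
Qed.

End NewtonPolygon.

Section Dickson.
Variable m : nat.
Implicit Types (P : pset m) (x y : pt m) (F : seq (pt m)).

Definition le_upto n x y := forall i : 'I_m, (i < n)%N -> (x i <= y i)%N.

Definition covers n P F :=
  (forall y, List.In y F -> P y) /\ forall x, P x -> exists2 y, List.In y F & le_upto n y x.

Lemma le_uptoS n (j : 'I_m) x y :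
  j = n :> nat -> le_upto n x y -> (x j <= y j)%N -> le_upto n.+1 x y.
Proof.
move=> jn xy xyj i; rewrite ltnS leq_eqVlt => /orP[/eqP ij|]; last exact: xy.
by have -> : i = j by apply: val_inj; rewrite /= ij jn.
Qed.

Lemma leq_bigmax_In (j : 'I_m) F y : List.In y F -> (y j <= \max_(z <- F) z j)%N.
Proof.
elim: F => [|z F IH] //= [<-|/IH yF]; rewrite big_cons ?leq_maxl //.
exact: leq_trans yF (leq_maxr _ _).
Qed.

(* For the next coordinate [j], a cover for the first [n] coordinates handles
   the points with [x j] above the largest [y j] it uses; each of the finitely
   many slices [x j = b] below that bound is covered separately. *)
Lemma dickson_upto n P : exists F, covers n P F.
Proof.
elim: n P => [|n IH] P.
  have [[x Px]|noP] := classic (exists x, P x).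
    by exists [:: x]; split=> [y [<-|]|y _] //; exists x => //; left.
  by exists [::]; split=> // x Px; case: noP; exists x.
have [nm|mn] := ltnP n m; last first.
  have [F [FP FP']] := IH P; exists F; split=> // x /FP'[y yF yx].
  by exists y => // i _; apply: yx; apply: leq_trans (ltn_ord i) mn.
pose j := Ordinal nm; have [F0 [F0P F0c]] := IH P.
have slices b : exists F, (forall y, List.In y F -> P y) /\
    forall x, P x -> (x j < b)%N -> exists2 y, List.In y F & le_upto n.+1 y x.
  elim: b => [|b [F1 [F1P F1c]]]; first by exists [::].
  have [Fb [FbP Fbc]] := IH (fun x => P x /\ x j = b).
  exists (F1 ++ Fb); split=> [y /List.in_app_iff[/F1P|/FbP[]]|x Px] //.
  rewrite ltnS leq_eqVlt => /orP[/eqP xjb|/(F1c x Px)[y yF yx]]; last first.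
    by exists y => //; apply/List.in_app_iff; left.
  have [y yF yx] := Fbc x (conj Px xjb); exists y; first by apply/List.in_app_iff; right.
  by apply: (le_uptoS (j := j)) => //; have [_ ->] := FbP y yF; rewrite xjb.
have [F1 [F1P F1c]] := slices (\max_(z <- F0) z j).
exists (F0 ++ F1); split=> [y /List.in_app_iff[/F0P|/F1P]|x Px] //.
have [/(F1c x Px)[y yF yx]|Bx] := ltnP (x j) (\max_(z <- F0) z j).
  by exists y => //; apply/List.in_app_iff; right.
have [y yF yx] := F0c x Px; exists y; first by apply/List.in_app_iff; left.
exact: (le_uptoS (j := j)) _ yx (leq_trans (leq_bigmax_In j yF) Bx).
Qed.

Lemma dickson P : exists F, (forall y, List.In y F -> P y) /\
  forall x, P x -> exists2 y, List.In y F & forall i, (y i <= x i)%N.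
Proof.
have [F [FP FP']] := dickson_upto m P; exists F; split=> // x /FP'[y yF yx].
by exists y => // i; apply: yx.
Qed.

End Dickson.

Section Vertices.
Variables (R : realFieldType) (m : nat).
Implicit Types (X Y Z W G : pset m) (x y g u : pt m) (s r t : seq (R * pt m)).

Definition eq_pt x y := [forall i, x i == y i].

Lemma eq_ptP x y : reflect (x = y) (eq_pt x y).
Proof.
apply: (iffP forallP) => [xy|-> i //]; apply: functional_extensionality => i.
exact/eqP.
Qed.

Lemma irredundant_subseq (F : seq (pt m)) :
  exists E, [/\ forall g, List.In g E -> List.In g F,
    forall f, List.In f F -> dominates (fun y => List.In y E) 1 (ptR R f)
    & forall g, List.In g E -> ~ dominates (delpt (fun y => List.In y E) g) 1 (ptR R g)].
Proof.
have [n] := ubnP (size F); elim: n F => // n IH F /ltnSE sF.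
have [[f [fF Df]]|irr] := classic (exists f, List.In f F /\
    dominates (delpt (fun y => List.In y F) f) 1 (ptR R f)); last first.
  exists F; split=> // [f fF|g gF Dg]; first exact: dominates_pt.
  by apply: irr; exists g.
pose F' := filter (fun y => ~~ eq_pt y f) F.
have F'F y : List.In y F' <-> List.In y F /\ y <> f.
  rewrite List.filter_In; split=> [[yF /negP yf]|[yF yf]]; split=> //.
  - by move/eq_ptP.
  - by apply/negP => /eq_ptP.
have /IH[E [EF' F'E Eirr]] : (size F' < n)%N.
  by apply: leq_trans sF; apply: (size_filter_lt fF); rewrite negbK; apply/eq_ptP.
have FE y : List.In y F -> y <> f -> dominates (fun y => List.In y E) 1 (ptR R y).
  by move=> yF yf; apply: F'E; apply/F'F.
exists E; split=> // [g /EF' /F'F[]//|f' f'F].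
have [->|] := classic (f' = f); last exact: FE.
by apply: dominates_trans Df => y [yF yf]; apply: FE.
Qed.

Definition tdeg x : nat := \sum_i x i.
Definition tdegR (v : 'I_m -> R) : R := \sum_i v i.

Lemma tdegR_pt x : tdegR (ptR R x) = (tdeg x)%:R.
Proof. by rewrite /tdegR natr_sum. Qed.

Lemma tdegR_le (v v' : 'I_m -> R) : (forall i, v i <= v' i) -> tdegR v <= tdegR v'.
Proof. by move=> vv'; apply: ler_sum => i _. Qed.

Lemma tdeg_lt x y : (forall i, x i <= y i)%N -> y <> x -> (tdeg x < tdeg y)%N.
Proof.
move=> xy yx; have [i xyi] : exists i, y i <> x i.
  apply: NNPP => nxy; apply: yx; apply: functional_extensionality => i.
  by apply: NNPP => xyi; apply: nxy; exists i.
rewrite /tdeg (bigD1 i) //= [X in (_ < X)%N](bigD1 i) //= -addSn.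
apply: leq_add; last exact: leq_sum.
by rewrite ltn_neqAle xy andbT; apply/eqP => e; apply: xyi.
Qed.

Lemma comb_sep G g t : supported G t -> exists r, supported (delpt G g) r /\
  forall i, lincomb t i = (weight t - weight r) * (g i)%:R + lincomb r i.
Proof.
move=> Gt; exists (filter (fun q => ~~ eq_pt q.2 g) t); split.
  move=> q /List.filter_In[/Gt[q0 Gq] /negP qg]; split=> //; split=> // e.
  by apply: qg; apply/eq_ptP.
move=> i; rewrite /weight /lincomb !big_filter (bigID (fun q => eq_pt q.2 g)) /=.
rewrite [X in X - _](bigID (fun q => eq_pt q.2 g)) /= addrK mulr_suml.
by congr (_ + _); apply: eq_bigr => q /eq_ptP->.
Qed.

(* Either [u] lies strictly above [g], so that [tdeg u > tdeg g], or some
   [u i < g i] forces [weight r * tdeg g >= 1]; the last conclusion covers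
   both cases and is linear in [(u, weight r)], so it survives aggregation. *)
Lemma point_split G g u : u <> g -> dominates G 1 (ptR R u) ->
  exists r, [/\ supported (delpt G g) r,
    forall i, (1 - weight r) * (g i)%:R + lincomb r i <= (u i)%:R
    & (tdeg g)%:R + 1 <= (tdeg u)%:R + ((tdeg g)%:R + 1) * (tdeg g)%:R * weight r].
Proof.
move=> ug [t [Gt wt tu]].
have [gu|/forallPn[i0]] := boolP [forall i, g i <= u i]%N.
  exists [::]; split=> [q []|i|]; rewrite /weight /lincomb ?big_nil ?subr0 ?mul1r ?addr0.
    by rewrite ler_nat; apply: (forallP gu).
  by rewrite mulr0 addr0 natr1 ler_nat; apply: tdeg_lt => // i; apply: (forallP gu).
rewrite -ltnNge => ui0.
have [r [Gr tr]] := comb_sep g Gt; rewrite wt in tr.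
exists r; split=> // [i|]; first by rewrite -tr.
have b0 := weight_ge0 Gr; have l0 := lincomb_ge0 i0 Gr.
have := tu i0; rewrite tr /ptR => gil.
have uig : ((u i0)%:R : R) + 1 <= (g i0)%:R by rewrite natr1 ler_nat.
have giS : ((g i0)%:R : R) <= (tdeg g)%:R by rewrite ler_nat /tdeg (bigD1 i0) //= leq_addr.
have bg : 1 <= weight r * (g i0)%:R by nra.
have bS : 1 <= weight r * (tdeg g)%:R by nra.
have S0 : (0 : R) <= (tdeg g)%:R := ler0n _ _; have Su0 : (0 : R) <= (tdeg u)%:R := ler0n _ _.
have : 0 <= ((tdeg g)%:R + 1) * (weight r * (tdeg g)%:R - 1) by apply: mulr_ge0; lra.
nra.
Qed.

(* Aggregating [point_split] over the combination, the degree bound forces the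
   total weight of the parts avoiding [g] to be positive; rescaling them puts
   [g] in N(G \ g). *)
Lemma dominates_delpt_trans W G g :
  (forall u, W u -> u <> g -> dominates G 1 (ptR R u)) ->
  dominates (delpt W g) 1 (ptR R g) -> dominates (delpt G g) 1 (ptR R g).
Proof.
move=> WG Dg; pose S : R := (tdeg g)%:R.
pose Q w v := exists r, [/\ supported (delpt G g) r,
  forall i, (w - weight r) * (g i)%:R + lincomb r i <= v i
  & (S + 1) * w <= tdegR v + (S + 1) * S * weight r].
have [r [Gr rg degr]] : Q 1 (ptR R g).
  apply: (dominates_ind (Q := Q)) Dg
    => [w v v' vv' [r [Gr rv dr]]||c u w v c0 [Wu ug] [r [Gr rv dr]]].
  - exists r; split=> // [i|]; first exact: le_trans (vv' i).
    by apply: le_trans dr _; rewrite lerD2r; apply: tdegR_le.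
  - exists [::]; split=> [q []|i|]; rewrite /weight /lincomb /tdegR ?big_nil ?big1 //.
    + by rewrite subrr mul0r addr0.
    + by rewrite !mulr0 addr0.
  - have [ru [Gru ruu dru]] := point_split ug (WG u Wu ug).
    exists (scalec c ru ++ r); split=> [|i|].
    + by apply: supported_cat => //; apply: supported_scale.
    + rewrite weight_cat lincomb_cat weight_scale lincomb_scale.
      have := ler_wpM2l c0 (ruu i); have := rv i; rewrite /ptR; nra.
    + rewrite weight_cat weight_scale /tdegR big_split /= -mulr_sumr -/(tdegR v) -natr_sum.
      have := ler_wpM2l c0 dru; move: dr; rewrite /S; nra.
rewrite tdegR_pt -/S mulr1 in degr.
have b0 : 0 < weight r.
  rewrite lt_neqAle (weight_ge0 Gr) andbT; apply/eqP => b0.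
  by move: degr; rewrite -b0 mulr0 addr0; lra.
exists (scalec (weight r)^-1 r); split.
- by apply: supported_scale; rewrite // invr_ge0 ltW.
- by rewrite weight_scale mulVf // gt_eqF.
- move=> i; rewrite lincomb_scale /ptR mulrC ler_pdivrMr //.
  by have := rg i; rewrite /ptR; nra.
Qed.

Lemma dominates_Vert W (w : R) v : dominates W w v -> dominates (Vert R W) w v.
Proof.
move=> D; have [F [FW WF]] := dickson W.
have [E [EF FE Eirr]] := irredundant_subseq F.
have WE u : W u -> dominates (fun y => List.In y E) 1 (ptR R u).
  move=> Wu; have [f fF fu] := WF u Wu.
  by apply: dominates_le (FE f fF) => i; rewrite ler_nat.
have EV g : List.In g E -> Vert R W g.
  move=> gE; apply/vertexP; split; first exact/FW/EF.
  by move/(dominates_delpt_trans (fun u Wu _ => WE u Wu)); apply: Eirr.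
by apply: dominates_trans D => u Wu; apply: dominates_sub EV (WE u Wu).
Qed.

Lemma Vert_sandwich Y Z : (forall x, Vert R Y x -> Z x) -> (forall x, Z x -> Y x) ->
  Vert R Z = Vert R Y.
Proof.
move=> VZ ZY; apply: pset_ext => x; split=> [/vertexP[Zx N]|/vertexP[Yx N]].
  apply/vertexP; split=> [|D]; first exact: ZY.
  apply: N; apply: dominates_sub (dominates_Vert D) => y /vertexP[[Yy yx] Ny].
  split=> //; apply: VZ; apply/vertexP; split=> // Dy; apply: Ny.
  apply: dominates_delpt_trans Dy => u Yu _.
  by have [->|ux] := classic (u = x); [apply: D | apply: dominates_pt].
apply/vertexP; split=> [|D]; first exact/VZ/vertexP.
by apply: N; apply: dominates_sub D => y [Zy yx]; split=> //; apply: ZY.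
Qed.

End Vertices.

Section SemiringLaws.
Variables (R : realFieldType) (m : nat).
Implicit Types (A B C X Y : pset m).

Lemma Vert_id X : Vert R (Vert R X) = Vert R X.
Proof. by apply: Vert_sandwich => // x []. Qed.

Lemma inTT_Vert X : inTT R X -> Vert R X = X.
Proof. by move=> [Y ->]; apply: Vert_id. Qed.

Lemma Vert_zero : Vert R (@tzero m) = @tzero m.
Proof. by apply: pset_ext => x; split=> [[]|]. Qed.

Lemma Vert_one : Vert R (@tone m) = @tone m.
Proof.
apply: pset_ext => x; split=> [[]//|x0]; apply/vertexP; split=> //.
apply: dominates_empty => y [y0]; apply; apply: functional_extensionality => i.
by rewrite x0 y0.
Qed.

Lemma Vert_unionr A Y : Vert R (fun x => A x \/ Vert R Y x) = Vert R (fun x => A x \/ Y x).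
Proof.
apply: Vert_sandwich => [x /vertexP[[Ax|Yx] N]|x [Ax|[Yx _]]];
  [by left | right | by left | by right].
apply/vertexP; split=> // D; apply: N; apply: dominates_sub D => y [Yy yx].
by split=> //; right.
Qed.

Lemma union_comm A B : (fun x => A x \/ B x) = (fun x => B x \/ A x).
Proof. by apply: pset_ext => x; split=> -[]; auto. Qed.

Lemma Vert_unionl A Y : Vert R (fun x => Vert R Y x \/ A x) = Vert R (fun x => Y x \/ A x).
Proof. by rewrite union_comm Vert_unionr union_comm. Qed.

Definition addpt (a x : pt m) : pt m := fun i => (a i + x i)%N.

Lemma dominates_translate A Y a y : A a -> dominates (delpt Y y) 1 (ptR R y) ->
  dominates (delpt (minkowski A Y) (addpt a y)) 1 (ptR R (addpt a y)).
Proof.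
move=> Aa D; set Z := delpt (minkowski A Y) (addpt a y).
suff : dominates Z 1 (fun i => 1 * (a i)%:R + ptR R y i).
  by apply: dominates_le => i; rewrite /ptR /addpt mul1r natrD.
apply: (dominates_ind (Q := fun w v => dominates Z w (fun i => w * (a i)%:R + v i))) D
  => [w v v' vv'||c x w v c0 [Yx xy] D].
- by move=> Dv; apply: dominates_le Dv => i; rewrite lerD2l.
- by apply: dominates_le (dominates0 _ _) => i; rewrite mul0r addr0.
- have Zax : Z (addpt a x).
    split; first by exists a, x.
    move=> axy; apply: xy; apply: functional_extensionality => i.
    exact: (@addnI (a i)) (congr1 (fun p => p i) axy).
  have := dominatesD (dominatesZ c0 (dominates_pt R Zax)) D; rewrite mulr1.
  by apply: dominates_le => i; rewrite /ptR /addpt natrD; lra.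
Qed.

Lemma Vert_minkowskir A Y : Vert R (minkowski A (Vert R Y)) = Vert R (minkowski A Y).
Proof.
apply: Vert_sandwich => [z /vertexP[[a [y [Aa [Yy za]]]] N]|z [a [y [Aa [[Yy _] za]]]]].
  exists a, y; split=> //; split=> //; apply/vertexP; split=> // D; apply: N.
  have -> : z = addpt a y by apply: functional_extensionality.
  exact: dominates_translate.
by exists a, y.
Qed.

Lemma minkowskiC A B : minkowski A B = minkowski B A.
Proof.
apply: pset_ext => z; split=> -[x [y [Ax [By xyz]]]]; exists y, x.
all: by split=> //; split=> // i; rewrite addnC.
Qed.

Lemma minkowskiA A B C : minkowski A (minkowski B C) = minkowski (minkowski A B) C.
Proof.
apply: pset_ext => z; split.
  move=> [x [w [Ax [[y [u [By [Cu yuw]]]] xwz]]]].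
  exists (addpt x y), u; split; first by exists x, y.
  by split=> // i; rewrite xwz yuw addnA.
move=> [w [u [[x [y [Ax [By xyw]]]] [Cu wuz]]]].
exists x, (addpt y u); split=> //; split; first by exists y, u.
by move=> i; rewrite wuz xyw addnA.
Qed.

Lemma minkowskiDr A B C :
  minkowski A (fun x => B x \/ C x) = (fun x => minkowski A B x \/ minkowski A C x).
Proof.
apply: pset_ext => z; split; first by move=> [x [y [Ax [[By|Cy] xyz]]]]; [left|right]; exists x, y.
by move=> [|] [x [y [Ax [Dy xyz]]]]; exists x, y; split=> //; split=> //; [left|right].
Qed.

Lemma minkowski1l A : minkowski (@tone m) A = A.
Proof.
apply: pset_ext => z; split=> [[x [y [x0 [Ay xyz]]]]|Az]; last by exists (fun _ => 0%N), z.
suff -> : z = y by [].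
by apply: functional_extensionality => i; rewrite xyz x0.
Qed.

Lemma minkowski0l A : minkowski (@tzero m) A = @tzero m.
Proof. by apply: pset_ext => z; split=> [[x [y []]]|]. Qed.

Lemma oplusC A B : oplus R A B = oplus R B A.
Proof. by rewrite /oplus union_comm. Qed.

Lemma oplusA A B C : oplus R A (oplus R B C) = oplus R (oplus R A B) C.
Proof.
rewrite [RHS]oplusC /oplus !Vert_unionr; congr (Vert R _).
by apply: pset_ext => x; tauto.
Qed.

Lemma oplus0l A : oplus R (@tzero m) A = Vert R A.
Proof. by congr (Vert R _); apply: pset_ext => x; split=> [[[]|]|]; [|right]. Qed.

Lemma oplusid A : oplus R A A = Vert R A.
Proof. by congr (Vert R _); apply: pset_ext => x; tauto. Qed.

Lemma odotC A B : odot R A B = odot R B A.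
Proof. by rewrite /odot minkowskiC. Qed.

Lemma odotA A B C : odot R A (odot R B C) = odot R (odot R A B) C.
Proof. by rewrite [RHS]odotC /odot !Vert_minkowskir minkowskiA minkowskiC. Qed.

Lemma odot1l A : odot R (@tone m) A = Vert R A.
Proof. by rewrite /odot minkowski1l. Qed.

Lemma odot0l A : odot R (@tzero m) A = @tzero m.
Proof. by rewrite /odot minkowski0l Vert_zero. Qed.

Lemma odotDr A B C : odot R A (oplus R B C) = oplus R (odot R A B) (odot R A C).
Proof. by rewrite /odot /oplus Vert_minkowskir Vert_unionl Vert_unionr minkowskiDr. Qed.

End SemiringLaws.

(* The argument does not need [1 <= m]. *)
Theorem mainTheorem5 (R : realFieldType) (m : nat) (hm : (1 <= m)%N) :
  comm_idem_semiring (@inTT R m) (@oplus R m) (@odot R m) (@tzero m) (@tone m).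
Proof.
have VK := @inTT_Vert R m.
split; first by exists (@tzero m); rewrite Vert_zero.
split; first by exists (@tone m); rewrite Vert_one.
split; first by move=> A B _ _; exists (fun x => A x \/ B x).
split; first by move=> A B _ _; exists (minkowski A B).
split; first by move=> *; apply: oplusA.
split; first by move=> *; apply: oplusC.
split; first by move=> A /VK; rewrite oplus0l.
split; first by move=> *; apply: odotA.
split; first by move=> *; apply: odotC.
split; first by move=> A /VK; rewrite odot1l.
split; first by move=> *; apply: odotDr.
split; first by move=> A _; apply: odot0l.
by move=> A /VK; rewrite oplusid.
Qed.
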